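(* Let $n\geqslant 2$ and $\alpha\in\mathbf{I}\mathbb{N}_{\infty}^n$. Then there exist a unique element $\sigma_\alpha$ of the group of units $H(\mathbb{I})$ and unique idempotents $\varepsilon_{l(\alpha)},\varepsilon_{r(\alpha)}$ of $\mathbf{I}\mathbb{N}_{\infty}^n$ such that $\alpha=\sigma_\alpha\varepsilon_{l(\alpha)}=\varepsilon_{r(\alpha)}\sigma_\alpha$.
   Context: $\mathbb{N}=\{1,2,3,\ldots\}$, $n\geqslant 2$, and $\mathbb{N}^n$ carries the Euclidean metric $d$. A partial isometry of $\mathbb{N}^n$ is an injective partial map $\alpha\colon\mathbb{N}^n\rightharpoonup\mathbb{N}^n$ with $d((\mathbf{x})\alpha,(\mathbf{y})\alpha)=d(\mathbf{x},\mathbf{y})$ for all $\mathbf{x},\mathbf{y}\in\operatorname{dom}\alpha$; it is cofinite if $\mathbb{N}^n\setminus\operatorname{dom}\alpha$ and $\mathbb{N}^n\setminus\operatorname{ran}\alpha$ are finite. $\mathbf{I}\mathbb{N}_{\infty}^n$ is the monoid of all partial cofinite isometries of $\mathbb{N}^n$ under composition of partial maps written on the right: $\mathbf{x}(\alpha\beta)=(\mathbf{x}\alpha)\beta$ with $\operatorname{dom}(\alpha\beta)=\{\mathbf{x}\in\operatorname{dom}\alpha\colon \mathbf{x}\alpha\in\operatorname{dom}\beta\}$. Its identity is the identity map $\mathbb{I}$ of $\mathbb{N}^n$ and $H(\mathbb{I})$ is its group of units. *)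

From HB Require Import structures.
From mathcomp Require Import all_boot all_order all_algebra.
Set Implicit Arguments. Unset Strict Implicit. Unset Printing Implicit Defensive.
Import Order.TTheory GRing.Theory Num.Theory.

Definition Nn (n : nat) := {x : {ffun 'I_n -> nat} | [forall i, 0 < x i]}.

(* Squared Euclidean distance; d(x,y) = sqrt (dist2 x y), so d is preserved
   iff dist2 is preserved. *)
Definition dist2 (n : nat) (x y : Nn n) : int :=
  (\sum_(i < n) (((val x) i)%:Z - ((val y) i)%:Z) ^+ 2)%R.

Definition ppmap (n : nat) := Nn n -> option (Nn n).

(* Composition written on the right: x (a b) = (x a) b. *)
Definition pmul (n : nat) (a b : ppmap n) : ppmap n :=
  fun x => obind b (a x).

Definition pid {n : nat} : ppmap n := fun x => Some x.

Definition pinjective (n : nat) (a : ppmap n) : Prop :=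
  forall x y z, a x = Some z -> a y = Some z -> x = y.

Definition pisometry (n : nat) (a : ppmap n) : Prop :=
  forall x y x' y', a x = Some x' -> a y = Some y' -> dist2 x' y' = dist2 x y.

Definition pcofinite (n : nat) (a : ppmap n) : Prop :=
  (exists s : seq (Nn n), forall x, a x = None -> x \in s) /\
  (exists s : seq (Nn n), forall y, (~ exists x, a x = Some y) -> y \in s).

Definition INinf (n : nat) (a : ppmap n) : Prop :=
  pinjective a /\ pisometry a /\ pcofinite a.

Definition unitH (n : nat) (s : ppmap n) : Prop :=
  INinf s /\ exists t, INinf t /\ pmul s t = (@pid n) /\ pmul t s = (@pid n).

Definition idemp (n : nat) (e : ppmap n) : Prop :=
  INinf e /\ pmul e e = e.

From HB Require Import structures.
From mathcomp Require Import all_boot all_order all_algebra all_fingroup.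
From mathcomp Require Import zify ring.
From Stdlib Require Import FunctionalExtensionality Classical.

Set Implicit Arguments. Unset Strict Implicit. Unset Printing Implicit Defensive.
Import Order.TTheory GRing.Theory Num.Theory.

(* Rigidity: a partial isometry f of N^n preserves the inner products of
   differences, so testing it on a point z and its neighbours z + e_j shows
   that on its domain f is affine, y_(pi j) = sg_j x_j + c_j, with pi injective
   and sg_j = +-1.  If dom f and ran f are cofinite they contain every point
   with one huge coordinate; as all coordinates are positive this forces
   sg_j = 1 and c_j = 0 (the other coordinate of the test points is where
   n >= 2 is used: for n = 1 the shift x |-> x + 1 is a counterexample).
   So every element of IN_oo^n is the restriction of a coordinate permutation
   sigma.  Units are exactly the total such maps and idempotents are partial
   identities, whence alpha = sigma id_(ran alpha) = id_(dom alpha) sigma.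
   A permutation is determined by its values on the cofinite set dom alpha,
   which gives uniqueness of sigma, and the idempotents are then unique by
   cancelling the unit sigma. *)

Section CofiniteIsometries.
Variable n : nat.
Implicit Types (x y z : Nn n) (f s e : ppmap n) (p : {perm 'I_n}).
Local Open Scope ring_scope.

Definition coord x (i : 'I_n) : int := (val x i)%:Z.

Lemma val_gt0 x i : (0 < val x i)%N.
Proof. by case: x => x /= /forallP. Qed.

Lemma coord_gt0 x i : 0 < coord x i.
Proof. by rewrite ltz_nat val_gt0. Qed.

Lemma Nn_ext x y : (forall i, val x i = val y i) -> x = y.
Proof. by move=> h; apply: val_inj; apply/ffunP => i; apply: h. Qed.

Lemma Npt_subproof (v : 'I_n -> nat) : [forall i, 0 < [ffun i => (v i).+1] i]%N.
Proof. by apply/forallP => i; rewrite ffunE. Qed.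

Definition Npt (v : 'I_n -> nat) : Nn n := Sub [ffun i => (v i).+1] (Npt_subproof v).

Lemma val_Npt v i : val (Npt v) i = (v i).+1.
Proof. by rewrite /= ffunE. Qed.

Lemma coord_Npt v i : coord (Npt v) i = (v i).+1%:Z.
Proof. by rewrite /coord val_Npt. Qed.

Lemma permute_subproof p x : [forall k, 0 < [ffun k => val x ((p^-1)%g k)] k]%N.
Proof. by apply/forallP => k; rewrite ffunE val_gt0. Qed.

Definition permute p x : Nn n := Sub [ffun k => val x ((p^-1)%g k)] (permute_subproof p x).

Lemma val_permute p x k : val (permute p x) k = val x ((p^-1)%g k).
Proof. by rewrite /= ffunE. Qed.

Lemma permuteK p : cancel (permute p) (permute (p^-1)%g).
Proof. by move=> x; apply: Nn_ext => k; rewrite !val_permute invgK permK. Qed.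

Lemma permuteKV p : cancel (permute (p^-1)%g) (permute p).
Proof. by move=> x; apply: Nn_ext => k; rewrite !val_permute invgK permKV. Qed.

Lemma dist2_permute p x y : dist2 (permute p x) (permute p y) = dist2 x y.
Proof.
rewrite /dist2 [RHS](reindex_inj (@perm_inj _ (p^-1)%g)) /=.
by apply: eq_bigr => k _; rewrite !val_permute.
Qed.

Lemma exists_neq : (2 <= n)%N -> forall j : 'I_n, exists k : 'I_n, k != j.
Proof.
move=> hn j; pose i0 : 'I_n := Ordinal (ltnW hn); pose i1 : 'I_n := Ordinal hn.
by case: (eqVneq j i0) => [-> | hj]; [exists i1; rewrite eq_sym | exists i0; rewrite eq_sym].
Qed.

Definition far (B : nat) x := exists i, (B < val x i)%N.

Lemma far_notin (L : seq (Nn n)) : exists B, forall x, far B x -> x \notin L.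
Proof.
exists (\max_(y <- L) \max_i val y i)%N => x [i hi]; apply/negP => xL.
have : (val x i <= \max_(y <- L) \max_i val y i)%N.
  apply: (leq_trans (@leq_bigmax _ (fun k => val x k) i)).
  exact: (@leq_bigmax_seq _ L xpredT (fun y => \max_k val y k)%N x xL isT).
by rewrite leqNgt hi.
Qed.

Lemma pcofinite_far f : pcofinite f -> exists B,
  (forall x, far B x -> exists y, f x = Some y) /\
  (forall y, far B y -> exists x, f x = Some y).
Proof.
move=> [[Ld hd] [Lr hr]]; have [B hB] := far_notin (Ld ++ Lr).
exists B; split.
  move=> x /hB; rewrite mem_cat negb_or => /andP[xLd _].
  by case e: (f x) => [y|]; [exists y | move: xLd; rewrite hd].
move=> y /hB; rewrite mem_cat negb_or => /andP[_ yLr].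
by apply: NNPP => h; move: yLr; rewrite hr.
Qed.

Lemma permute_far_inj (B : nat) p p' :
  (forall x, far B x -> permute p x = permute p' x) -> p = p'.
Proof.
move=> h; apply/permP => j.
pose x := Npt (fun i => B + (i == j))%N.
have /h /(congr1 (fun y => val y (p j))) : far B x by exists j; rewrite val_Npt eqxx; lia.
rewrite !val_permute permK !val_Npt eqxx.
case: eqP => [hj | _] /=; last lia.
by move=> _; rewrite -{2}hj permKV.
Qed.

Lemma pisometry_dot f x y z x' y' z' : pisometry f ->
  f x = Some x' -> f y = Some y' -> f z = Some z' ->
  \sum_i (coord x' i - coord z' i) * (coord y' i - coord z' i) =
  \sum_i (coord x i - coord z i) * (coord y i - coord z i).
Proof.
move=> hf hx hy hz.
have polar a b c : 2 * \sum_i (coord a i - coord c i) * (coord b i - coord c i)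
    = dist2 a c + dist2 b c - dist2 a b.
  rewrite /dist2 mulr_sumr -big_split /= -sumrB.
  by apply: eq_bigr => i _; rewrite /coord; ring.
apply: (@mulfI _ 2) => //.
by rewrite !polar (hf _ _ _ _ hx hz) (hf _ _ _ _ hy hz) (hf _ _ _ _ hx hy).
Qed.

Lemma sum_sqr_int_eq1 (u : 'I_n -> int) : \sum_i u i ^+ 2 = 1 ->
  exists k, (u k = 1 \/ u k = -1) /\ forall i, i != k -> u i = 0.
Proof.
move=> hs.
have [k hk] : exists k, u k != 0.
  apply: NNPP => hu0; suff : \sum_i u i ^+ 2 = 0 by rewrite hs.
  apply: big1 => i _; apply/eqP; rewrite sqrf_eq0.
  by apply/negPn/negP => hi; apply: hu0; exists i.
exists k; move: hs; rewrite (bigD1 k) //=.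
have : 1 <= u k ^+ 2 by rewrite expr2; move: (u k) hk => a; nia.
have : 0 <= \sum_(i | i != k) u i ^+ 2 by apply: sumr_ge0 => i _; apply: sqr_ge0.
set r := \sum_(i | i != k) _ => r_ge0 uk_ge1 hs.
have r0 : r == 0 by lia.
have : u k ^+ 2 == 1 by lia.
rewrite sqrf_eq1 => uk; split; first by case/orP: uk => /eqP; [left | right].
move=> i hi; move: r0; rewrite /r psumr_eq0 => [|j _]; last exact: sqr_ge0.
by move/allP/(_ i (mem_index_enum i)); rewrite hi sqrf_eq0 => /eqP.
Qed.

Lemma orthonormal_signed_perm (u : 'I_n -> 'I_n -> int) :
  (forall j l, \sum_i u j i * u l i = (j == l)%:Z) ->
  exists pi, injective pi /\ forall j,
    (u j (pi j) = 1 \/ u j (pi j) = -1) /\ forall i, i != pi j -> u j i = 0.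
Proof.
move=> hu.
have /fin_all_exists[pi hpi] : forall j, exists k,
    (u j k = 1 \/ u j k = -1) /\ forall i, i != k -> u j i = 0.
  move=> j; apply: sum_sqr_int_eq1; have := hu j j; rewrite eqxx => h1; rewrite -[RHS]h1.
  by apply: eq_bigr => i _; rewrite expr2.
exists pi; split=> // j l pijl; apply/eqP; have := hu j l.
rewrite (bigD1 (pi j)) //= big1 => [|i hi]; last by rewrite ((hpi j).2 i hi) mul0r.
rewrite addr0 {2}pijl; case: (j == l) => //.
by case: (hpi j).1 => ->; case: (hpi l).1 => ->.
Qed.

Lemma pisometry_affine f (v : 'I_n -> nat) : pisometry f ->
  (exists fz, f (Npt v) = Some fz) ->
  (forall j, exists y, f (Npt (fun i => v i + (i == j))%N) = Some y) ->
  exists pi sg (c : 'I_n -> int),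
    [/\ injective pi, forall j, sg j = 1 \/ sg j = -1 &
        forall x y, f x = Some y -> forall j, coord y (pi j) = sg j * coord x j + c j].
Proof.
move=> hf [fz hfz] /fin_all_exists[fe hfe].
have dze j i : coord (Npt (fun i => v i + (i == j))%N) i - coord (Npt v) i = (i == j)%:Z.
  by rewrite !coord_Npt; case: (i == j) => /=; lia.
pose u j i := coord (fe j) i - coord fz i.
have dot_u x y j : f x = Some y ->
    \sum_i (coord y i - coord fz i) * u j i = coord x j - coord (Npt v) j.
  move=> hxy; rewrite (pisometry_dot hf hxy (hfe j) hfz).
  under eq_bigr => i _ do rewrite dze.
  rewrite (bigD1 j) //= big1 => [|i hij]; first by rewrite eqxx mulr1 addr0.
  by rewrite (negbTE hij) mulr0.
have u_orth j l : \sum_i u j i * u l i = (j == l)%:Z.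
  by apply: etrans (dot_u _ _ l (hfe j)) _; rewrite dze eq_sym.
have [pi [pi_inj hpi]] := orthonormal_signed_perm u_orth.
exists pi, (fun j => u j (pi j)), (fun j => coord fz (pi j) - u j (pi j) * coord (Npt v) j).
split=> // [j | x y hxy j]; first exact: (hpi j).1.
have := dot_u _ _ j hxy.
rewrite (bigD1 (pi j)) //= big1 => [|i hi]; last by rewrite ((hpi j).2 i hi) mulr0.
by case: (hpi j).1 => ->; lia.
Qed.

Lemma affine_cofinite_translation (B : nat) f pi sg (c : 'I_n -> int) :
  (2 <= n)%N -> (forall j, sg j = 1 \/ sg j = -1) ->
  (forall x y, f x = Some y -> forall j, coord y (pi j) = sg j * coord x j + c j) ->
  (forall x, far B x -> exists y, f x = Some y) ->
  (forall y, far B y -> exists x, f x = Some y) ->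
  forall j, sg j = 1 /\ c j = 0.
Proof.
move=> hn hsg hf dom ran j.
have sg1 : sg j = 1.
  case: (hsg j) => // sgN; pose x := Npt (fun _ => B + absz (c j))%N.
  have [y hy] : exists y, f x = Some y by apply: dom; exists j; rewrite val_Npt; lia.
  by have := hf _ _ hy j; rewrite sgN coord_Npt; have := coord_gt0 y (pi j); lia.
split=> //; apply/eqP; rewrite eq_le; apply/andP; split.
  have [k hk] := exists_neq hn (pi j).
  pose y := Npt (fun i => if i == pi j then 0%N else B).
  have [x hx] : exists x, f x = Some y by apply: ran; exists k; rewrite val_Npt (negbTE hk).
  by have := hf _ _ hx j; rewrite sg1 coord_Npt eqxx; have := coord_gt0 x j; lia.
have [k hk] := exists_neq hn j.
pose x := Npt (fun i => if i == j then 0%N else B).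
have [y hy] : exists y, f x = Some y by apply: dom; exists k; rewrite val_Npt (negbTE hk).
by have := hf _ _ hy j; rewrite sg1 coord_Npt eqxx; have := coord_gt0 y (pi j); lia.
Qed.

Lemma pisometry_cofinite_permute f : (2 <= n)%N -> pisometry f -> pcofinite f ->
  exists p, forall x y, f x = Some y -> y = permute p x.
Proof.
move=> hn hf /pcofinite_far[B [dom ran]].
have farB (w : 'I_n -> nat) : (forall i, B <= w i)%N -> far B (Npt w).
  by move=> hw; exists (Ordinal (ltnW hn)); rewrite val_Npt ltnS hw.
have [pi [sg [c [pi_inj hsg hf_aff]]]] :=
  pisometry_affine hf (dom _ (farB _ (fun=> leqnn B))) (fun j => dom _ (farB _ (fun i => leq_addr _ _))).
have /all_and2[sg1 c0] := affine_cofinite_translation hn hsg hf_aff dom ran.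
exists (perm pi_inj) => x y hxy; apply: Nn_ext => k.
rewrite val_permute -{1}(permKV (perm pi_inj) k) permE.
by have := hf_aff _ _ hxy ((perm pi_inj)^-1 k)%g; rewrite sg1 c0 mul1r addr0 => -[].
Qed.

Lemma pmulA f g h : pmul f (pmul g h) = pmul (pmul f g) h.
Proof. by apply: functional_extensionality => x; rewrite /pmul; case: (f x). Qed.

Lemma pid_pmul f : pmul pid f = f.
Proof. by []. Qed.

Lemma pmul_pid f : pmul f pid = f.
Proof. by apply: functional_extensionality => x; rewrite /pmul; case: (f x). Qed.

Lemma unitH_pmulI s : unitH s -> injective (pmul s).
Proof.
move=> [_ [t [_ [_ hts]]]] e e' h.
by rewrite -[e]pid_pmul -[e']pid_pmul -hts -!pmulA h.
Qed.

Lemma unitH_pmulIr s : unitH s -> injective (fun e => pmul e s).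
Proof.
move=> [_ [t [_ [hst _]]]] e e' h.
by rewrite -[e]pmul_pid -[e']pmul_pid -hst !pmulA h.
Qed.

Definition pperm p : ppmap n := fun x => Some (permute p x).

Lemma INinf_pperm p : INinf (pperm p).
Proof.
split; [|split; [|split]].
- move=> x y z; rewrite /pperm => -[<-] /(congr1 (omap (permute (p^-1)%g))) /=.
  by rewrite !permuteK => -[].
- by rewrite /pperm => x y x' y' [<-] [<-]; apply: dist2_permute.
- by exists [::].
- by exists [::] => y h; exfalso; apply: h; exists (permute (p^-1)%g y); rewrite /pperm permuteKV.
Qed.

Lemma unitH_pperm p : unitH (pperm p).
Proof.
split; first exact: INinf_pperm.
exists (pperm (p^-1)%g); split; first exact: INinf_pperm.
by split; apply: functional_extensionality => x; rewrite /pmul /pperm /= ?permuteK ?permuteKV.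
Qed.

Lemma unitH_pperm_eq s : (2 <= n)%N -> unitH s -> exists p, s = pperm p.
Proof.
move=> hn [[_ [hiso hcof]] [t [_ [hst _]]]].
have [p hp] := pisometry_cofinite_permute hn hiso hcof.
exists p; apply: functional_extensionality => x.
have : pmul s t x = Some x by rewrite hst.
by rewrite /pmul /pperm; case e: (s x) => [y|] //= _; rewrite (hp _ _ e).
Qed.

Definition pidon (D : pred (Nn n)) : ppmap n := fun x => if D x then Some x else None.

Lemma idemp_pidon (D : pred (Nn n)) (L : seq (Nn n)) :
  (forall x, ~~ D x -> x \in L) -> idemp (pidon D).
Proof.
rewrite /pidon => hL; split; last first.
  by apply: functional_extensionality => x; rewrite /pmul; case Dx: (D x) => //=; rewrite Dx.
split; [|split; [|split]].
- by move=> x y z; case: (D x) => // -[->]; case: (D y) => // -[->].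
- by move=> x y x' y'; case: (D x) => // -[<-]; case: (D y) => // -[<-].
- by exists L => x; case Dx: (D x) => // _; rewrite hL ?Dx.
- exists L => y hy; apply: hL; apply: contra_notN hy => Dy.
  by exists y; rewrite Dy.
Qed.

Lemma pmul_idemp_Some s e x y : idemp e -> pmul s e x = Some y -> s x = Some y.
Proof.
move=> [[e_inj _] e_idem]; rewrite /pmul; case: (s x) => //= z ez.
have : pmul e e z = e z by rewrite e_idem.
by rewrite /pmul ez /= => /(e_inj _ _ _ ez) ->.
Qed.

Lemma idemp_pidon_preim f (g g' : Nn n -> Nn n) : cancel g g' -> pcofinite f ->
  idemp (pidon (fun y => isSome (f (g y)))).
Proof.
move=> gK [[L hL] _]; apply: (@idemp_pidon _ [seq g' x | x <- L]) => y /=.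
by case e: (f _) => [//|] _; rewrite -(gK y); apply/map_f/hL.
Qed.

Lemma pperm_factor f p : (forall x y, f x = Some y -> y = permute p x) ->
  f = pmul (pperm p) (pidon (fun y => isSome (f (permute (p^-1)%g y)))) /\
  f = pmul (pidon (fun x => isSome (f x))) (pperm p).
Proof.
move=> hp; split; apply: functional_extensionality => x;
  rewrite /pmul /pperm /pidon /= ?permuteK;
  by case e: (f x) => [y|] //=; rewrite (hp _ _ e).
Qed.

End CofiniteIsometries.

Theorem lemma3p5 (n : nat) (hn : 2 <= n) (a : ppmap n) (ha : INinf a) :
  exists s el er : ppmap n,
    (unitH s /\ idemp el /\ idemp er /\ a = pmul s el /\ a = pmul er s) /\
    (forall s' el' er' : ppmap n,
        unitH s' -> idemp el' -> idemp er' ->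
        a = pmul s' el' -> a = pmul er' s' ->
        s' = s /\ el' = el /\ er' = er).
Proof.
have [_ [hiso hcof]] := ha.
have [p hp] := pisometry_cofinite_permute hn hiso hcof.
have [a_sel a_ers] := pperm_factor hp.
have hs := unitH_pperm p.
exists (pperm p), (pidon (fun y => isSome (a (permute (p^-1)%g y)))), (pidon (fun x => isSome (a x))).
split.
  split=> //; split; first exact: idemp_pidon_preim (permuteKV p) hcof.
  by split=> //; apply: (@idemp_pidon_preim _ _ id id (fun=> erefl) hcof).
move=> s' el' er' hs' hel' _ a_sel' a_ers'.
have [p' s'E] := unitH_pperm_eq hn hs'.
have [B [dom _]] := pcofinite_far hcof.
have s's : s' = pperm p.
  rewrite s'E; congr pperm; apply: (@permute_far_inj _ B) => x /dom[y axy].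
  have /(pmul_idemp_Some hel') : pmul s' el' x = Some y by rewrite -a_sel'.
  by rewrite s'E => -[->]; apply: hp.
split=> //; rewrite s's in a_sel' a_ers'; split.
  by apply: (unitH_pmulI hs); rewrite -a_sel'.
by apply: (unitH_pmulIr hs); rewrite -a_ers'.
Qed.
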